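(* The category $\mathsf{BA}^\mathsf{S}$ is dually isomorphic to the category $\mathsf{BA}^\mathsf{Q}$. Explicitly, the assignments (identity on objects) sending a subordination $S\colon A\to B$ to the quasi-semi-homomorphism $\Delta_S\colon B\to\mathcal J(A)$, $\Delta_S(b)=S^{-1}[b]=\{a\in A\mid a\mathrel{S}b\}$, and sending a quasi-semi-homomorphism $\Delta\colon A\to\mathcal J(B)$ to the subordination $S_\Delta\colon B\to A$, $b\mathrel{S_\Delta}a \iff b\in\Delta(a)$, are well-defined contravariant functors that are mutually inverse.
   Context: For a boolean algebra $B$, $\mathcal J(B)$ denotes the set of ideals of $B$. A quasi-semi-homomorphism from a boolean algebra $A$ to a boolean algebra $B$ is a function $\Delta\colon A\to\mathcal J(B)$ with $\Delta(1)=B$ and $\Delta(a\wedge b)=\Delta(a)\cap\Delta(b)$ for all $a,b\in A$. $\mathsf{BA}^\mathsf{Q}$ is the category of boolean algebras and quasi-semi-homomorphisms, where the identity on $A$ is $a\mapsto{\downarrow}a$ and the composite of $\Delta_1\colon A\to\mathcal J(B)$ and $\Delta_2\colon B\to\mathcal J(C)$ is $(\Delta_2\circ\Delta_1)(a)=\bigcup\{\Delta_2(b)\mid b\in\Delta_1(a)\}$. A subordination relation from a boolean algebra $A$ to a boolean algebra $B$ is a relation $S\subseteq A\times B$ (written $a\mathrel{S}c$) such that for $a,b\in A$, $c,d\in B$: (S1) $0\mathrel{S}0$ and $1\mathrel{S}1$; (S2) $a\mathrel{S}c$ and $b\mathrel{S}c$ imply $(a\vee b)\mathrel{S}c$; (S3)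 $a\mathrel{S}c$ and $a\mathrel{S}d$ imply $a\mathrel{S}(c\wedge d)$; (S4) $a\le b$, $b\mathrel{S}c$, $c\le d$ imply $a\mathrel{S}d$. $\mathsf{BA}^\mathsf{S}$ is the category of boolean algebras and subordination relations; the identity on $A$ is the order $\le_A$ and composition is relational composition: for $S_1\colon A\to B$, $S_2\colon B\to C$, $a\mathrel{(S_2\circ S_1)}c$ iff there is $b\in B$ with $a\mathrel{S_1}b$ and $b\mathrel{S_2}c$. *)

(* boolean algebras are complemented distributive lattices
   with top and bottom, i.e. Order.ctbDistrLatticeType. *)
From HB Require Import structures.
From mathcomp Require Import all_boot all_order.
Set Implicit Arguments. Unset Strict Implicit. Unset Printing Implicit Defensive.
Import Order.Theory.
Local Open Scope order_scope.

(* An ideal: contains 0, downward closed, closed under binary joins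
   (improper ideal B allowed, as Delta(1) = B). *)
Definition is_ideal {d} {B : ctbDistrLatticeType d} (I : B -> Prop) : Prop :=
  [/\ I \bot,
      (forall x y : B, x <= y -> I y -> I x) &
      (forall x y : B, I x -> I y -> I (x `|` y))].

(* Quasi-semi-homomorphism A -> J(B), represented as D : A -> (B -> Prop). *)
Definition qsh {dA dB} {A : ctbDistrLatticeType dA} {B : ctbDistrLatticeType dB}
  (D : A -> B -> Prop) : Prop :=
  [/\ (forall a, is_ideal (D a)),
      (forall b : B, D \top b) &
      (forall (a a' : A) (b : B), D (a `&` a') b <-> (D a b /\ D a' b))].

Definition qid {d} (A : ctbDistrLatticeType d) : A -> A -> Prop :=
  fun a x => x <= a.

Definition qcomp {dA dB dC} {A : ctbDistrLatticeType dA}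
  {B : ctbDistrLatticeType dB} {C : ctbDistrLatticeType dC}
  (D1 : A -> B -> Prop) (D2 : B -> C -> Prop) : A -> C -> Prop :=
  fun a c => exists b, D1 a b /\ D2 b c.

Definition subordination {dA dB} {A : ctbDistrLatticeType dA}
  {B : ctbDistrLatticeType dB} (S : A -> B -> Prop) : Prop :=
  [/\ S \bot \bot /\ S \top \top,
      (forall (a b : A) (c : B), S a c -> S b c -> S (a `|` b) c),
      (forall (a : A) (c d : B), S a c -> S a d -> S a (c `&` d)) &
      (forall (a b : A) (c d : B), a <= b -> S b c -> c <= d -> S a d)].

Definition sid {d} (A : ctbDistrLatticeType d) : A -> A -> Prop :=
  fun a b => a <= b.

Definition scomp {dA dB dC} {A : ctbDistrLatticeType dA}
  {B : ctbDistrLatticeType dB} {C : ctbDistrLatticeType dC}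
  (S2 : B -> C -> Prop) (S1 : A -> B -> Prop) : A -> C -> Prop :=
  fun a c => exists b, S1 a b /\ S2 b c.

Definition Delta_of {dA dB} {A : ctbDistrLatticeType dA}
  {B : ctbDistrLatticeType dB} (S : A -> B -> Prop) : B -> A -> Prop :=
  fun b a => S a b.

Definition S_of {dA dB} {A : ctbDistrLatticeType dA}
  {B : ctbDistrLatticeType dB} (D : A -> B -> Prop) : B -> A -> Prop :=
  fun b a => D a b.

(* Equality of morphisms (extensional equality of relations / ideal-valued maps). *)
Definition releq {X Y : Type} (R1 R2 : X -> Y -> Prop) : Prop :=
  forall x y, R1 x y <-> R2 x y.

Arguments sid {d} A _ _.
Arguments qid {d} A _ _.

From mathcomp Require Import all_boot all_order.
Import Order.Theory.
Local Open Scope order_scope.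

(* Both functors are just transposition of a relation, so functoriality and
   mutual inverseness hold definitionally; the content is that transposition
   exchanges the axioms (S1)-(S4) with "ideal-valued, meet-preserving, top to B".
   The key observation is that a quasi-semi-homomorphism is monotone, since
   a <= a' means a = a `&` a'. *)

Section Transposition.
Variables (dA dB : Order.disp_t).
Variables (A : ctbDistrLatticeType dA) (B : ctbDistrLatticeType dB).

Lemma qsh_monotone (D : A -> B -> Prop) (a a' : A) (b : B) :
  qsh D -> a <= a' -> D a b -> D a' b.
Proof.
case=> _ _ Dmeet le_aa' Dab.
have : D (a `&` a') b by move: le_aa' => /meet_idPl ->.
by case/Dmeet.
Qed.

Lemma is_ideal_Delta_of (S : A -> B -> Prop) (b : B) :
  subordination S -> is_ideal (Delta_of S b).
Proof.
case=> [[S00 _] Sjoin _ Smono]; split; rewrite /Delta_of.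
- exact: Smono (le0x _) S00 (le0x _).
- by move=> x y le_xy Syb; apply: Smono le_xy Syb (lexx _).
- by move=> x y; apply: Sjoin.
Qed.

Lemma qsh_Delta_of (S : A -> B -> Prop) : subordination S -> qsh (Delta_of S).
Proof.
move=> subS; split; first by move=> b; apply: is_ideal_Delta_of.
- by case: subS => [[_ S11] _ _ Smono] a; apply: Smono (lex1 _) S11 (lexx _).
- case: subS => _ _ Smeet Smono b b' a; rewrite /Delta_of; split.
  + by move=> Sa; split; apply: Smono (lexx _) Sa _; rewrite ?leIl ?leIr.
  + by case=> Sab Sab'; apply: Smeet.
Qed.

Lemma subordination_S_of (D : A -> B -> Prop) : qsh D -> subordination (S_of D).
Proof.
move=> qshD; case: (qshD) => Dideal Dtop Dmeet; split; rewrite /S_of.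
- by split; [case: (Dideal \bot) | apply: Dtop].
- by move=> b b' a; case: (Dideal a) => _ _; apply.
- by move=> b a a' Dab Da'b; apply/Dmeet.
- move=> b b' a a' le_bb' Dab' le_aa'; apply: qsh_monotone qshD le_aa' _.
  by case: (Dideal a) => _ Ddown _; apply: Ddown le_bb' Dab'.
Qed.

Lemma Delta_ofK (S : A -> B -> Prop) : releq (S_of (Delta_of S)) S.
Proof. by []. Qed.

Lemma S_ofK (D : A -> B -> Prop) : releq (Delta_of (S_of D)) D.
Proof. by []. Qed.

End Transposition.

Lemma Delta_of_sid d (A : ctbDistrLatticeType d) : releq (Delta_of (sid A)) (qid A).
Proof. by []. Qed.

Lemma S_of_qid d (A : ctbDistrLatticeType d) : releq (S_of (qid A)) (sid A).
Proof. by []. Qed.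

Section Composition.
Variables (dA dB dC : Order.disp_t).
Variables (A : ctbDistrLatticeType dA) (B : ctbDistrLatticeType dB).
Variable (C : ctbDistrLatticeType dC).

Lemma Delta_of_scomp (S1 : A -> B -> Prop) (S2 : B -> C -> Prop) :
  releq (Delta_of (scomp S2 S1)) (qcomp (Delta_of S2) (Delta_of S1)).
Proof. by move=> c a; split; case=> b [S1ab S2bc]; exists b. Qed.

Lemma S_of_qcomp (D1 : A -> B -> Prop) (D2 : B -> C -> Prop) :
  releq (S_of (qcomp D1 D2)) (scomp (S_of D1) (S_of D2)).
Proof. by move=> c a; split; case=> b [D1ab D2bc]; exists b. Qed.

End Composition.

Theorem theorem2p5 :
  (forall dA dB (A : ctbDistrLatticeType dA) (B : ctbDistrLatticeType dB)
     (S : A -> B -> Prop), subordination S -> qsh (Delta_of S)) /\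
  (forall dA dB (A : ctbDistrLatticeType dA) (B : ctbDistrLatticeType dB)
     (D : A -> B -> Prop), qsh D -> subordination (S_of D)) /\
  (forall d (A : ctbDistrLatticeType d), releq (Delta_of (sid A)) (qid A)) /\
  (forall d (A : ctbDistrLatticeType d), releq (S_of (qid A)) (sid A)) /\
  (forall dA dB dC (A : ctbDistrLatticeType dA) (B : ctbDistrLatticeType dB)
     (C : ctbDistrLatticeType dC) (S1 : A -> B -> Prop) (S2 : B -> C -> Prop),
     subordination S1 -> subordination S2 ->
     releq (Delta_of (scomp S2 S1)) (qcomp (Delta_of S2) (Delta_of S1))) /\
  (forall dA dB dC (A : ctbDistrLatticeType dA) (B : ctbDistrLatticeType dB)
     (C : ctbDistrLatticeType dC) (D1 : A -> B -> Prop) (D2 : B -> C -> Prop),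
     qsh D1 -> qsh D2 ->
     releq (S_of (qcomp D1 D2)) (scomp (S_of D1) (S_of D2))) /\
  (forall dA dB (A : ctbDistrLatticeType dA) (B : ctbDistrLatticeType dB)
     (S : A -> B -> Prop), subordination S -> releq (S_of (Delta_of S)) S) /\
  (forall dA dB (A : ctbDistrLatticeType dA) (B : ctbDistrLatticeType dB)
     (D : A -> B -> Prop), qsh D -> releq (Delta_of (S_of D)) D).
Proof.
split; first exact: qsh_Delta_of.
split; first exact: subordination_S_of.
split; first exact: Delta_of_sid.
split; first exact: S_of_qid.
split; first by move=> *; apply: Delta_of_scomp.
split; first by move=> *; apply: S_of_qcomp.
by split=> *; [apply: Delta_ofK | apply: S_ofK].
Qed.
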